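(* Let $G$ be a group satisfying the property $\mathsf{FM}$ and $\nu$ a conjugation-invariant pseudo-norm on $G$. Then for any elements $g_1,\dots,g_k\in G$ and real numbers $s_1,\dots,s_k$, the limit \[ \lim_{n\to\infty}\frac1n\,\nu\big(g_1^{[s_1n]}\cdots g_k^{[s_kn]}\big) \] exists, where $[\cdot]$ denotes the integer part.
   Context: A conjugation-invariant pseudo-norm on a group $G$ is a function $\nu\colon G\to\mathbb{R}_{\ge0}$ with $\nu(1)=0$, $\nu(f)=\nu(f^{-1})$, $\nu(fg)\le\nu(f)+\nu(g)$ and $\nu(gfg^{-1})=\nu(f)$ for all $f,g\in G$. For a subgroup $H\le G$, the fragmentation norm $\nu_H(f)$ is the minimal $k$ such that $f=g_1h_1g_1^{-1}\cdots g_kh_kg_k^{-1}$ with $g_i\in G$, $h_i\in H$ ($\infty$ if none exists); $G$ is c-generated by $H$ if $\nu_H$ is finite everywhere. For $K\subset G$, $\mathrm{D}^f_H(K)$ is the set of $h_0\in G$ such that for all $g_1,\dots,g_k\in G$ there is $h\in G$ such that every element of $hh_0h^{-1}K(hh_0h^{-1})^{-1}$ commutes with every element of $g_1Hg_1^{-1}\cup\dots\cup g_kHg_k^{-1}$. $(G,H)$ satisfies property $\mathsf{FM}$ if $G$ is c-generated by $H$ and $\mathrm{D}^f_H(h_1Hh_1^{-1}\cup\dots\cup h_kHh_k^{-1})\ne\emptyset$ for all $h_1,\dots,h_k\in G$; $G$ satisfies $\mathsf{FM}$ if $(G,H)$ does for some subgroup $H$. *)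

From Stdlib Require Import Reals ZArith List.
Open Scope R_scope.

Record Group := {
  carrier :> Type;
  gmul : carrier -> carrier -> carrier;
  gone : carrier;
  ginv : carrier -> carrier;
  gmulA : forall x y z, gmul x (gmul y z) = gmul (gmul x y) z;
  gmul1 : forall x, gmul gone x = x;
  gmulg1 : forall x, gmul x gone = x;
  gmulV : forall x, gmul (ginv x) x = gone;
  gmulgV : forall x, gmul x (ginv x) = gone
}.

Arguments gmul {G} : rename.
Arguments gone {G} : rename.
Arguments ginv {G} : rename.

Definition gconj {G : Group} (g f : G) : G := gmul g (gmul f (ginv g)).

Definition gcommute {G : Group} (x y : G) : Prop := gmul x y = gmul y x.

Fixpoint npow {G : Group} (g : G) (n : nat) : G :=
  match n with
  | O => gone
  | S n' => gmul g (npow g n')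
  end.

Definition zpow {G : Group} (g : G) (z : Z) : G :=
  match z with
  | Z0 => gone
  | Zpos p => npow g (Pos.to_nat p)
  | Zneg p => ginv (npow g (Pos.to_nat p))
  end.

Definition conj_inv_pseudo_norm {G : Group} (nu : G -> R) : Prop :=
  nu gone = 0 /\
  (forall f, 0 <= nu f) /\
  (forall f, nu f = nu (ginv f)) /\
  (forall f g, nu (gmul f g) <= nu f + nu g) /\
  (forall f g, nu (gconj g f) = nu f).

Definition is_subgroup {G : Group} (H : G -> Prop) : Prop :=
  H gone /\ (forall x y, H x -> H y -> H (gmul x y)) /\ (forall x, H x -> H (ginv x)).

Fixpoint prod_of_conj {G : Group} (H : G -> Prop) (k : nat) (f : G) : Prop :=
  match k with
  | O => f = gone
  | S k' => exists g h f', H h /\ prod_of_conj H k' f' /\ f = gmul (gconj g h) f'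
  end.

(* G is c-generated by H : the fragmentation norm nu_H is finite everywhere *)
Definition c_generated (G : Group) (H : G -> Prop) : Prop :=
  forall f : G, exists k, prod_of_conj H k f.

Definition in_conj_union {G : Group} (H : G -> Prop) (gs : list G) (y : G) : Prop :=
  exists g, In g gs /\ exists z, H z /\ y = gconj g z.

Definition Df {G : Group} (H : G -> Prop) (K : G -> Prop) (h0 : G) : Prop :=
  forall gs : list G, exists h : G,
    forall x, K x -> forall y, in_conj_union H gs y ->
      gcommute (gconj (gconj h h0) x) y.

Definition FM_pair (G : Group) (H : G -> Prop) : Prop :=
  c_generated G H /\
  forall hs : list G, exists h0 : G, Df H (in_conj_union H hs) h0.

Definition FM (G : Group) : Prop :=
  exists H : G -> Prop, is_subgroup H /\ FM_pair G H.

(* g_0^{[s_0 n]} g_1^{[s_1 n]} ... g_{k-1}^{[s_{k-1} n]} ; Int_part = floor *)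
Definition word_at {G : Group} (k : nat) (g : nat -> G) (s : nat -> R) (n : nat) : G :=
  fold_right (fun i acc => gmul (zpow (g i) (Int_part (s i * INR n))) acc)
    gone (seq 0 k).

(* Under FM, c-generation writes any element as a product of conjugates of H, and the
   displacement sets D^f_H then provide, for any g and any finite set B, a conjugate of
   g commuting with B; inducting on k, g_1, ..., g_k have conjugates g_i' = c_i g_i c_i^-1
   which pairwise commute. Replacing g_i by g_i' changes the norm of the word by at most
   2 (nu c_1 + ... + nu c_k), uniformly in n, which is invisible after dividing by n.
   For commuting g_i' the words multiply up to the exponent shifts
   [s(n+m)] - [s n] - [s m] in {0, 1}, so a(n) = nu(g_1'^[s_1 n] ... g_k'^[s_k n]) is
   subadditive up to the constant nu g_1' + ... + nu g_k', and Fekete's lemma gives the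
   limit of a(n)/n. *)

From Stdlib Require Import Reals ZArith List Lra Lia Classical.
Open Scope R_scope.

Section GroupLemmas.
Variable G : Group.
Implicit Types a b c x : G.

Lemma gmulKg a b : gmul (ginv a) (gmul a b) = b.
Proof. now rewrite gmulA, gmulV, gmul1. Qed.

Lemma ginv_unique a b : gmul a b = gone -> b = ginv a.
Proof. intro Hab. now rewrite <- (gmulKg a b), Hab, gmulg1. Qed.

Lemma ginv_mul a b : ginv (gmul a b) = gmul (ginv b) (ginv a).
Proof.
  symmetry; apply ginv_unique.
  now rewrite <- gmulA, (gmulA _ b), gmulgV, gmul1, gmulgV.
Qed.

Lemma gcommute_sym a b : gcommute a b -> gcommute b a.
Proof. now unfold gcommute. Qed.

Lemma gcommute_refl a : gcommute a a.
Proof. reflexivity. Qed.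

Lemma gcommute_1r x : gcommute x gone.
Proof. unfold gcommute; now rewrite gmul1, gmulg1. Qed.

Lemma gcommute_mulr x a b : gcommute x a -> gcommute x b -> gcommute x (gmul a b).
Proof.
  unfold gcommute; intros Ha Hb.
  now rewrite gmulA, Ha, <- gmulA, Hb, gmulA.
Qed.

Lemma gcommute_invr x a : gcommute x a -> gcommute x (ginv a).
Proof.
  unfold gcommute; intro Ha.
  transitivity (gmul (ginv a) (gmul (gmul x a) (ginv a))).
  - now rewrite Ha, <- gmulA, gmulKg.
  - now rewrite <- (gmulA _ x a), gmulgV, gmulg1.
Qed.

Lemma gcommute_npowr x a n : gcommute x a -> gcommute x (npow a n).
Proof.
  intro Ha; induction n; simpl.
  - apply gcommute_1r.
  - now apply gcommute_mulr.
Qed.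

Lemma gcommute_zpowr x a z : gcommute x a -> gcommute x (zpow a z).
Proof.
  intro Ha; destruct z; simpl.
  - apply gcommute_1r.
  - now apply gcommute_npowr.
  - now apply gcommute_invr, gcommute_npowr.
Qed.

Lemma zpow_succ a z : zpow a (z + 1) = gmul a (zpow a z).
Proof.
  destruct z as [|p|p]; simpl.
  - reflexivity.
  - now rewrite Pos.add_1_r, Pos2Nat.inj_succ.
  - destruct (Pos.succ_pred_or p) as [->|<-]; simpl.
    + now rewrite gmulg1, gmulgV.
    + rewrite Z.pos_sub_lt by lia.
      replace (Pos.succ (Pos.pred p) - 1)%positive with (Pos.pred p) by lia.
      rewrite Pos2Nat.inj_succ; simpl.
      rewrite ginv_mul, gmulA.
      rewrite (gcommute_invr a _ (gcommute_npowr a a _ (gcommute_refl a))).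
      now rewrite <- gmulA, gmulgV, gmulg1.
Qed.

Lemma zpow_pred a z : zpow a (z - 1) = gmul (ginv a) (zpow a z).
Proof.
  rewrite <- (Z.sub_add 1 z) at 2.
  now rewrite zpow_succ, gmulKg.
Qed.

Lemma zpow_add a m n : zpow a (m + n) = gmul (zpow a m) (zpow a n).
Proof.
  induction m using Z.peano_ind.
  - simpl; now rewrite gmul1.
  - replace (Z.succ m + n)%Z with (m + n + 1)%Z by lia.
    now rewrite <- Z.add_1_r, !zpow_succ, IHm, gmulA.
  - replace (Z.pred m + n)%Z with (m + n - 1)%Z by lia.
    now rewrite <- Z.sub_1_r, !zpow_pred, IHm, gmulA.
Qed.

Lemma gconj_mul c a b : gconj c (gmul a b) = gmul (gconj c a) (gconj c b).
Proof. unfold gconj; now rewrite <- !gmulA, gmulKg. Qed.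

Lemma gconj_1 c : gconj c gone = gone.
Proof. unfold gconj; now rewrite gmul1, gmulgV. Qed.

Lemma gconj_inv c a : gconj c (ginv a) = ginv (gconj c a).
Proof. apply ginv_unique. now rewrite <- gconj_mul, gmulgV, gconj_1. Qed.

Lemma gconj_npow c a n : npow (gconj c a) n = gconj c (npow a n).
Proof.
  induction n; simpl.
  - now rewrite gconj_1.
  - now rewrite IHn, gconj_mul.
Qed.

Lemma gconj_zpow c a z : zpow (gconj c a) z = gconj c (zpow a z).
Proof.
  destruct z; simpl.
  - now rewrite gconj_1.
  - apply gconj_npow.
  - now rewrite gconj_npow, gconj_inv.
Qed.

End GroupLemmas.

Section Products.
Variable G : Group.

Inductive product_of (P : G -> Prop) : G -> Prop :=
| product_of_1 : product_of P gone
| product_of_mul x y : P x -> product_of P y -> product_of P (gmul x y).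

Lemma product_of_mono (P Q : G -> Prop) f :
  (forall x, P x -> Q x) -> product_of P f -> product_of Q f.
Proof. intros HPQ Hf; induction Hf; constructor; auto. Qed.

Lemma gcommute_product_of (P : G -> Prop) x f :
  (forall y, P y -> gcommute x y) -> product_of P f -> gcommute x f.
Proof.
  intros Hx Hf; induction Hf.
  - apply gcommute_1r.
  - apply gcommute_mulr; auto.
Qed.

Lemma gconj_product_of (P : G -> Prop) c f : product_of P f ->
  product_of (fun y => exists x, P x /\ y = gconj c x) (gconj c f).
Proof.
  intro Hf; induction Hf.
  - rewrite gconj_1; constructor.
  - rewrite gconj_mul; constructor; eauto.
Qed.

Lemma in_conj_union_incl (H : G -> Prop) gs gs' y :
  incl gs gs' -> in_conj_union H gs y -> in_conj_union H gs' y.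
Proof. intros Hincl [c [Hc Hy]]; exists c; auto. Qed.

Lemma prod_of_conj_product_of (H : G -> Prop) k f :
  prod_of_conj H k f -> exists gs, product_of (in_conj_union H gs) f.
Proof.
  revert f; induction k as [|k IHk]; simpl; intros f Hf.
  - subst f; exists nil; constructor.
  - destruct Hf as [c [h [f' [Hh [Hf' ->]]]]].
    destruct (IHk f' Hf') as [gs Hgs].
    exists (c :: gs); constructor.
    + exists c; split; [now left | eauto].
    + apply (product_of_mono (in_conj_union H gs)); auto.
      intro; apply in_conj_union_incl, incl_tl, incl_refl.
Qed.

Lemma c_generated_product_of (H : G -> Prop) (bs : list G) : c_generated G H ->
  exists gs, forall b, In b bs -> product_of (in_conj_union H gs) b.
Proof.
  intro Hgen; induction bs as [|b bs [gs Hgs]].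
  - exists nil; intros b [].
  - destruct (Hgen b) as [k Hk].
    destruct (prod_of_conj_product_of H k b Hk) as [gs' Hgs'].
    exists (gs' ++ gs); intros b' [<-|Hb'].
    + apply (product_of_mono (in_conj_union H gs')); auto.
      intro; apply in_conj_union_incl, incl_appl, incl_refl.
    + apply (product_of_mono (in_conj_union H gs)); auto.
      intro; apply in_conj_union_incl, incl_appr, incl_refl.
Qed.

End Products.

Lemma FM_displace (G : Group) : FM G -> forall (a : G) (bs : list G),
  exists c, forall b, In b bs -> gcommute (gconj c a) b.
Proof.
  intros [H [_ [Hgen HD]]] a bs.
  destruct (Hgen a) as [k Hk].
  destruct (prod_of_conj_product_of G H k a Hk) as [hs Ha].
  destruct (c_generated_product_of G H bs Hgen) as [gs Hbs].
  destruct (HD hs) as [h0 Hh0]; destruct (Hh0 gs) as [h Hh].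
  exists (gconj h h0); intros b Hb.
  apply (gcommute_product_of G (in_conj_union H gs)); auto.
  intros y Hy; apply gcommute_sym.
  refine (gcommute_product_of G _ _ _ _ (gconj_product_of G _ (gconj h h0) a Ha)).
  intros z [x [Hx ->]]; apply gcommute_sym; auto.
Qed.

Lemma FM_commuting_conjugates (G : Group) : FM G -> forall (g : nat -> G) k,
  exists c : nat -> G, forall i j, (i < k)%nat -> (j < k)%nat ->
    gcommute (gconj (c i) (g i)) (gconj (c j) (g j)).
Proof.
  intros HFM g k; induction k as [|k [c Hc]].
  - exists (fun _ => gone); intros; lia.
  - destruct (FM_displace G HFM (g k) (map (fun i => gconj (c i) (g i)) (seq 0 k)))
      as [d Hd].
    assert (Hdk : forall j, (j < k)%nat -> gcommute (gconj d (g k)) (gconj (c j) (g j))).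
    { intros j Hj; apply Hd, (in_map (fun i => gconj (c i) (g i))), in_seq; lia. }
    exists (fun i => if Nat.eqb i k then d else c i); intros i j Hi Hj.
    destruct (Nat.eqb_spec i k), (Nat.eqb_spec j k); subst.
    + apply gcommute_refl.
    + apply Hdk; lia.
    + apply gcommute_sym, Hdk; lia.
    + apply Hc; lia.
Qed.

Definition zprod {G : Group} (h : nat -> G) (v : nat -> Z) (l : list nat) : G :=
  fold_right (fun i acc => gmul (zpow (h i) (v i)) acc) gone l.

Definition Rsum_list (f : nat -> R) (l : list nat) : R :=
  fold_right (fun i acc => f i + acc) 0 l.

Lemma Rsum_list_ge0 f l : (forall i, 0 <= f i) -> 0 <= Rsum_list f l.
Proof. intro Hf; induction l as [|i l IH]; simpl; [lra | specialize (Hf i); lra]. Qed.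

Lemma gcommute_zprod (G : Group) (h : nat -> G) v l x :
  (forall j, In j l -> gcommute x (h j)) -> gcommute x (zprod h v l).
Proof.
  induction l as [|j l IH]; simpl; intro Hx.
  - apply gcommute_1r.
  - apply gcommute_mulr; auto using gcommute_zpowr.
Qed.

Lemma zprod_add (G : Group) (h : nat -> G) v w l :
  (forall i j, In i l -> In j l -> gcommute (h i) (h j)) ->
  zprod h (fun i => v i + w i)%Z l = gmul (zprod h v l) (zprod h w l).
Proof.
  induction l as [|i l IH]; simpl; intro Hh.
  - now rewrite gmul1.
  - rewrite IH, zpow_add by auto.
    assert (Hwv : gcommute (zpow (h i) (w i)) (zprod h v l)).
    { apply gcommute_zprod; intros j Hj.
      apply gcommute_sym, gcommute_zpowr, gcommute_sym; auto. }
    rewrite <- !gmulA; f_equal.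
    now rewrite !gmulA, Hwv.
Qed.

Lemma zprod_ext (G : Group) (h : nat -> G) v w l :
  (forall i, v i = w i) -> zprod h v l = zprod h w l.
Proof. intro Hvw; induction l as [|i l IH]; simpl; now rewrite ?Hvw, ?IH. Qed.

Section PseudoNorm.
Variable G : Group.
Variable nu : G -> R.
Hypothesis Hnu : conj_inv_pseudo_norm nu.

Lemma nu_1 : nu gone = 0.
Proof. apply Hnu. Qed.

Lemma nu_ge0 f : 0 <= nu f.
Proof. apply Hnu. Qed.

Lemma nu_inv f : nu (ginv f) = nu f.
Proof. symmetry; apply Hnu. Qed.

Lemma nu_mul_le f g : nu (gmul f g) <= nu f + nu g.
Proof. apply Hnu. Qed.

Lemma nu_gconj c f : nu (gconj c f) = nu f.
Proof. apply Hnu. Qed.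

(* u c v = (u c u^-1) (u v) and u v = (u c^-1 u^-1) (u c v). *)
Lemma nu_insert u c v : Rabs (nu (gmul u (gmul c v)) - nu (gmul u v)) <= nu c.
Proof.
  assert (E1 : gmul u (gmul c v) = gmul (gconj u c) (gmul u v))
    by (unfold gconj; now rewrite <- !gmulA, gmulKg).
  assert (E2 : gmul u v = gmul (gconj u (ginv c)) (gmul u (gmul c v)))
    by (unfold gconj; now rewrite <- !gmulA, !gmulKg).
  pose proof (nu_mul_le (gconj u c) (gmul u v)) as H1.
  pose proof (nu_mul_le (gconj u (ginv c)) (gmul u (gmul c v))) as H2.
  rewrite <- E1, nu_gconj in H1; rewrite <- E2, nu_gconj, nu_inv in H2.
  apply Rabs_le; lra.
Qed.

Lemma nu_gconj_factor x c a y :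
  Rabs (nu (gmul x (gmul (gconj c a) y)) - nu (gmul x (gmul a y))) <= 2 * nu c.
Proof.
  pose proof (nu_insert x c (gmul a (gmul (ginv c) y))) as H1.
  pose proof (nu_insert (gmul x a) (ginv c) y) as H2.
  rewrite nu_inv, <- !gmulA in H2.
  unfold gconj; rewrite <- !gmulA.
  split_Rabs; lra.
Qed.

Lemma nu_zprod_gconj x g c v l :
  Rabs (nu (gmul x (zprod (fun i => gconj (c i) (g i)) v l)) - nu (gmul x (zprod g v l)))
    <= Rsum_list (fun i => 2 * nu (c i)) l.
Proof.
  revert x; induction l as [|i l IH]; intro x; simpl.
  - rewrite Rminus_diag, Rabs_R0; lra.
  - rewrite gconj_zpow.
    pose proof (nu_gconj_factor x (c i) (zpow (g i) (v i))
                  (zprod (fun i => gconj (c i) (g i)) v l)) as H1.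
    specialize (IH (gmul x (zpow (g i) (v i)))); rewrite <- !gmulA in IH.
    split_Rabs; lra.
Qed.

Lemma nu_zprod_01 h e l : (forall i, e i = 0%Z \/ e i = 1%Z) ->
  nu (zprod h e l) <= Rsum_list (fun i => nu (h i)) l.
Proof.
  intro He; induction l as [|i l IH]; simpl.
  - rewrite nu_1; lra.
  - eapply Rle_trans; [apply nu_mul_le|].
    enough (nu (zpow (h i) (e i)) <= nu (h i)) by lra.
    destruct (He i) as [-> | ->]; simpl.
    + rewrite nu_1; apply nu_ge0.
    + rewrite gmulg1; lra.
Qed.

Lemma nu_zprod_quasi_subadditive h u v w l :
  (forall i j, In i l -> In j l -> gcommute (h i) (h j)) ->
  (forall i, u i = (v i + w i)%Z \/ u i = (v i + w i + 1)%Z) ->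
  nu (zprod h u l) <= nu (zprod h v l) + nu (zprod h w l) + Rsum_list (fun i => nu (h i)) l.
Proof.
  intros Hh Hu.
  set (e i := (u i - v i - w i)%Z).
  rewrite (zprod_ext G h u (fun i => (v i + w i) + e i)%Z) by (intro i; unfold e; lia).
  rewrite !zprod_add by auto.
  pose proof (nu_zprod_01 h e l ltac:(intro i; unfold e; specialize (Hu i); lia)).
  pose proof (nu_mul_le (gmul (zprod h v l) (zprod h w l)) (zprod h e l)).
  pose proof (nu_mul_le (zprod h v l) (zprod h w l)).
  lra.
Qed.

End PseudoNorm.

Lemma Un_cv_bounded_div_INR (u : nat -> R) (K : R) :
  (forall n, Rabs (u n) <= K) -> Un_cv (fun n => u n / INR n) 0.
Proof.
  intros HK eps Heps.
  assert (K0 : 0 <= K) by (eapply Rle_trans; [apply Rabs_pos | apply (HK 0%nat)]).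
  destruct (archimed_cor1 (eps / (K + 1))) as [N [HN N0]].
  { apply Rdiv_lt_0_compat; lra. }
  exists N; intros n Hn; unfold Rdist.
  assert (HNn : 0 < INR N <= INR n) by (split; [apply lt_0_INR | apply le_INR]; lia).
  assert (Hinv : / INR n <= / INR N) by (apply Rinv_le_contravar; lra).
  assert (Hinv0 : 0 < / INR n) by (apply Rinv_0_lt_compat; lra).
  rewrite Rminus_0_r; unfold Rdiv; rewrite Rabs_mult, (Rabs_pos_eq (/ INR n)) by lra.
  apply Rle_lt_trans with (K * (eps / (K + 1))).
  - apply Rmult_le_compat; auto using Rabs_pos; lra.
  - replace (K * (eps / (K + 1))) with (eps - eps / (K + 1)) by (field; lra).
    enough (0 < eps / (K + 1)) by lra.
    apply Rdiv_lt_0_compat; lra.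
Qed.

Lemma Un_cv_div_INR_perturb (x y : nat -> R) (l K : R) :
  Un_cv (fun n => y n / INR n) l -> (forall n, Rabs (x n - y n) <= K) ->
  Un_cv (fun n => x n / INR n) l.
Proof.
  intros Hy HK.
  pose proof (CV_plus _ _ _ _ Hy (Un_cv_bounded_div_INR _ _ HK)) as Hx.
  rewrite Rplus_0_r in Hx.
  refine (Un_cv_ext _ _ _ l Hx); intro n; unfold Rdiv; ring.
Qed.

Lemma Rseq_inf_ex (u : nat -> R) : (forall n, 0 <= u n) ->
  exists m, (forall n, m <= u n) /\ forall eps, 0 < eps -> exists n, u n < m + eps.
Proof.
  intro Hu.
  destruct (lb_to_glb u) as [a [Hub Hlub]].
  { exists 0; intros x [n ->]; unfold opp_seq; specialize (Hu n); lra. }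
  exists (- a); split.
  - intro n; enough (- u n <= a) by lra; apply Hub; now exists n.
  - intros eps Heps; apply NNPP; intro Hno.
    enough (a <= a - eps) by lra.
    apply Hlub; intros x [n ->]; unfold opp_seq.
    destruct (Rlt_le_dec (u n) (- a + eps)); [exfalso; eauto | lra].
Qed.

Definition subadditive (b : nat -> R) : Prop :=
  forall n m, b (n + m)%nat <= b n + b m.

Lemma subadditive_mul_add (b : nat -> R) : subadditive b ->
  forall q m r, b (q * m + r)%nat <= INR q * b m + b r.
Proof.
  intros Hb q m r; induction q as [|q IH].
  - rewrite INR_0; simpl; lra.
  - replace (S q * m + r)%nat with (m + (q * m + r))%nat by lia.
    rewrite S_INR; eapply Rle_trans; [apply Hb | lra].
Qed.

Lemma subadditive_ratio_le (b : nat -> R) (n0 n : nat) :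
  (forall n, 0 <= b n) -> subadditive b -> (0 < n0)%nat -> (0 < n)%nat ->
  b n / INR n <= b n0 / INR n0 + (INR n0 * b 1%nat + b 0%nat) / INR n.
Proof.
  intros Hb0 Hb Hn0 Hn.
  set (q := (n / n0)%nat); set (r := (n mod n0)%nat).
  assert (Hdiv : n = (q * n0 + r)%nat) by (unfold q, r; rewrite (Nat.div_mod n n0) at 1; lia).
  assert (Hr : INR r <= INR n0) by (apply le_INR, Nat.lt_le_incl, Nat.mod_upper_bound; lia).
  assert (Hq : INR q * INR n0 <= INR n) by (rewrite <- mult_INR; apply le_INR; lia).
  assert (P0 : 0 < INR n0) by (apply lt_0_INR; lia).
  assert (P : 0 < INR n) by (apply lt_0_INR; lia).
  assert (Hbr : b r <= INR r * b 1%nat + b 0%nat).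
  { rewrite <- (Nat.mul_1_r r) at 1; rewrite <- (Nat.add_0_r (r * 1)).
    now apply subadditive_mul_add. }
  assert (Hbn : b n <= INR q * b n0 + b r) by (rewrite Hdiv at 1; now apply subadditive_mul_add).
  assert (Hqb : INR q * b n0 <= INR n * (b n0 / INR n0)).
  { replace (INR q * b n0) with (INR q * INR n0 * (b n0 / INR n0)) by (field; lra).
    apply Rmult_le_compat_r; [apply Rle_mult_inv_pos|]; auto. }
  apply Rmult_le_reg_r with (INR n); [lra|].
  replace (b n / INR n * INR n) with (b n) by (field; lra).
  replace ((b n0 / INR n0 + (INR n0 * b 1%nat + b 0%nat) / INR n) * INR n)
    with (INR n * (b n0 / INR n0) + (INR n0 * b 1%nat + b 0%nat)) by (field; lra).
  pose proof (Hb0 1%nat); nra.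
Qed.

Lemma fekete_subadditive (b : nat -> R) : (forall n, 0 <= b n) -> subadditive b ->
  exists l, Un_cv (fun n => b n / INR n) l.
Proof.
  intros Hb0 Hb.
  destruct (Rseq_inf_ex (fun i => b (S i) / INR (S i))) as [m [Hlow Happ]].
  { intro i; apply Rle_mult_inv_pos; [apply Hb0 | apply lt_0_INR; lia]. }
  exists m; intros eps Heps.
  destruct (Happ (eps / 2)) as [i0 Hi0]; [lra|].
  set (M := INR (S i0) * b 1%nat + b 0%nat).
  destruct (Un_cv_bounded_div_INR (fun _ => M) (Rabs M) (fun _ => Rle_refl _) (eps / 2))
    as [N HN]; [lra|].
  exists (S N); intros n Hn; unfold Rdist.
  destruct n as [|i]; [lia|].
  specialize (HN (S i) ltac:(lia)); unfold Rdist in HN; rewrite Rminus_0_r in HN.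
  pose proof (Hlow i).
  pose proof (subadditive_ratio_le b (S i0) (S i) Hb0 Hb ltac:(lia) ltac:(lia)) as Hup.
  fold M in Hup; split_Rabs; lra.
Qed.

Lemma fekete_quasi_subadditive (a : nat -> R) (C : R) :
  (forall n, 0 <= a n) -> 0 <= C -> (forall n m, a (n + m)%nat <= a n + a m + C) ->
  exists l, Un_cv (fun n => a n / INR n) l.
Proof.
  intros Ha0 HC Ha.
  destruct (fekete_subadditive (fun n => a n + C)) as [l Hl].
  - intro n; specialize (Ha0 n); lra.
  - intros n m; specialize (Ha n m); lra.
  - exists l; apply (Un_cv_div_INR_perturb _ _ l C Hl).
    intro n; replace (a n - (a n + C)) with (- C) by ring.
    rewrite Rabs_Ropp, Rabs_pos_eq; lra.
Qed.

Lemma Int_part_add (x y : R) :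
  Int_part (x + y) = (Int_part x + Int_part y)%Z \/
  Int_part (x + y) = (Int_part x + Int_part y + 1)%Z.
Proof.
  destruct (base_Int_part x), (base_Int_part y), (base_Int_part (x + y)).
  assert (Hlt : (Int_part (x + y) - Int_part x - Int_part y < 2)%Z)
    by (apply lt_IZR; rewrite !minus_IZR; lra).
  assert (Hgt : (-1 < Int_part (x + y) - Int_part x - Int_part y)%Z)
    by (apply lt_IZR; rewrite !minus_IZR; lra).
  lia.
Qed.

Theorem proposition2p1 (G : Group) (nu : G -> R) (k : nat) (g : nat -> G) (s : nat -> R) :
  FM G -> conj_inv_pseudo_norm nu ->
  exists l : R, Un_cv (fun n => nu (word_at k g s n) / INR n) l.
Proof.
  intros HFM Hnu.
  destruct (FM_commuting_conjugates G HFM g k) as [c Hc].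
  set (h i := gconj (c i) (g i)).
  set (v n i := Int_part (s i * INR n)).
  destruct (fekete_quasi_subadditive (fun n => nu (zprod h (v n) (seq 0 k)))
              (Rsum_list (fun i => nu (h i)) (seq 0 k))) as [l Hl].
  - intro n; apply (nu_ge0 G nu Hnu).
  - apply Rsum_list_ge0; intro i; apply (nu_ge0 G nu Hnu).
  - intros n m; apply (nu_zprod_quasi_subadditive G nu Hnu).
    + intros i j Hi Hj; apply in_seq in Hi, Hj; apply Hc; lia.
    + intro i; unfold v; rewrite plus_INR, Rmult_plus_distr_l; apply Int_part_add.
  - exists l.
    apply (Un_cv_div_INR_perturb _ _ l (Rsum_list (fun i => 2 * nu (c i)) (seq 0 k)) Hl).
    intro n; pose proof (nu_zprod_gconj G nu Hnu gone g c (v n) (seq 0 k)) as Hn.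
    (* [word_at k g s n] is convertible to [zprod g (v n) (seq 0 k)]. *)
    rewrite !gmul1 in Hn; rewrite Rabs_minus_sym; exact Hn.
Qed.
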